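(* Let $m$ and $m_1$ be positive integers, $n=mm_1+2$, and let $\phi$ be a homogeneous polynomial on $\mathbb{R}^n$ of degree $m$ satisfying $|\nabla\phi(x)|^2=m^2|x|^{2m-2}$ and $\Delta\phi(x)=0$. Then: (i) $u=\operatorname{arctanh}\big(\phi(x)|x|^{-m}\big)$ is $p$-harmonic with $p=1+m_1$; (ii) $u=\dfrac{\phi(x)}{\sqrt{|x|^{2m}-\phi(x)^2}}$ is $p$-harmonic with $p=1+\tfrac12 m_1$; (iii) $u=\arcsin\big(\phi(x)|x|^{-m}\big)$ is $\infty$-harmonic, i.e. $\nabla u\cdot\nabla|\nabla u|^2=0$. Moreover, (iv) for every positive integer $k$, the function $u(x,y)=\ln\frac{|x|}{|y|}$, $(x,y)\in\mathbb{R}^k\times\mathbb{R}^k$, is $k$-harmonic in $\mathbb{R}^{2k}$.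
   Context: The $p$-Laplacian of a $C^2$ function $u$ is $\Delta_p u:=|\nabla u|^2\Delta u+\tfrac{p-2}{2}\nabla u\cdot\nabla|\nabla u|^2$; $u$ is $p$-harmonic if $\Delta_p u=0$ (on the open set where $u$ is defined and smooth). *)

From HB Require Import structures.
From mathcomp Require Import all_boot all_order all_algebra.
From mathcomp Require Import all_classical all_reals all_analysis.
From mathcomp Require mpoly.
Set Implicit Arguments. Unset Strict Implicit. Unset Printing Implicit Defensive.
Import Order.TTheory GRing.Theory Num.Theory.
Import numFieldNormedType.Exports.
Local Open Scope ring_scope.

Section Defs.
Variables (R : realType) (n : nat).

Definition evec (i : 'I_n) : 'rV[R]_n := delta_mx 0 i.

Definition pderiv (i : 'I_n) (f : 'rV[R]_n -> R) (x : 'rV[R]_n) : R :=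
  'D_(evec i) f x.

Definition grad (f : 'rV[R]_n -> R) (x : 'rV[R]_n) : 'rV[R]_n :=
  \row_i pderiv i f x.

Definition dotp (a b : 'rV[R]_n) : R := \sum_i a 0 i * b 0 i.
Definition sqnorm (a : 'rV[R]_n) : R := dotp a a.
Definition enorm (a : 'rV[R]_n) : R := Num.sqrt (sqnorm a).

Definition laplacian (f : 'rV[R]_n -> R) (x : 'rV[R]_n) : R :=
  \sum_i pderiv i (pderiv i f) x.

Definition sqgrad (u : 'rV[R]_n -> R) : 'rV[R]_n -> R :=
  fun x => sqnorm (grad u x).

Definition pLaplacian (p : R) (u : 'rV[R]_n -> R) (x : 'rV[R]_n) : R :=
  sqgrad u x * laplacian u x
  + (p - 2) / 2 * dotp (grad u x) (grad (sqgrad u) x).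

Definition infLaplacian (u : 'rV[R]_n -> R) (x : 'rV[R]_n) : R :=
  dotp (grad u x) (grad (sqgrad u) x).

Definition polyfun (P : mpoly.mpoly n R) : 'rV[R]_n -> R :=
  fun x => mpoly.meval (fun i => x 0 i) P.

End Defs.

Definition artanh (R : realType) (t : R) : R := ln ((1 + t) / (1 - t)) / 2.

From HB Require Import structures.
From mathcomp Require Import all_boot all_order all_algebra.
From mathcomp Require Import all_classical all_reals all_analysis.
From mathcomp Require mpoly.
Import (canonicals) mpoly.
From mathcomp Require Import ring lra.
Import Order.TTheory GRing.Theory Num.Theory.
Import numFieldNormedType.Exports.
Set Implicit Arguments. Unset Strict Implicit. Unset Printing Implicit Defensive.
Local Open Scope ring_scope.

(* Put t := phi / |x|^m and r := |x|^2. Euler's identity for the m-homogeneous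
   phi together with |grad phi|^2 = m^2 |x|^(2m-2) and Delta phi = 0 gives
     |grad t|^2 = m^2 (1 - t^2) / r,   grad t . x = 0,
     Delta t = - m (n + m - 2) t / r = - m^2 (m1 + 1) t / r   (n = m m1 + 2).
   Consequently, for u = G(t) with G'(s) = (1 - s^2)^(-k/2), the chain rule
   shows that Delta_p u is a multiple of (p - 1)(k - 1) - m1 and that
   grad u . grad |grad u|^2 is a multiple of k - 1. The functions in (i), (ii)
   and (iii) are G(t) for k = 2 (artanh), k = 3 (s / sqrt(1 - s^2)) and
   k = 1 (asin). For (iv), a direct computation on R^k1 x R^k2 gives
     Delta_p ln(|x| / |y|) = (|x|^-2 + |y|^-2) ((k1 - p) / |x|^2 - (k2 - p) / |y|^2),
   which vanishes for k1 = k2 = p. *)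

Section PointwiseDerivationRules.
Variables (R : realType) (V : normedModType R).
Implicit Types (f g : V -> R) (x v : V).

Lemma derive_line f x v :
  'D_v f x = 'D_(1 : R) (fun h : R => f (h *: v + x)) 0.
Proof.
rewrite /derive.
suff -> : (fun h : R => h^-1 *: ((f \o shift x) (h *: v) - f x)) =
  (fun h : R => h^-1 *: (((fun k : R => f (k *: v + x)) \o shift 0) (h *: 1)
     - f (0 *: v + x))) by [].
by apply/funext => h /=; rewrite addr0 scale0r add0r [_%:A]mulr1.
Qed.

Lemma is_derive_line f x v df :
  is_derive x v f df <-> is_derive (0 : R) 1 (fun h : R => f (h *: v + x)) df.
Proof.
split=> -[d e]; split.
- by move/derivable1P: d.
- by rewrite -derive_line.
- exact/derivable1P.
- by rewrite derive_line.
Qed.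

Lemma is_derive_comp1 f (g : R -> R) x v df dg :
  is_derive x v f df -> is_derive (f x) 1 g dg ->
  is_derive x v (fun y => g (f y)) (dg * df).
Proof.
move=> /is_derive_line fP gP; apply/is_derive_line.
have gP0 : is_derive ((fun h : R => f (h *: v + x)) 0) 1 g dg.
  by rewrite /= scale0r add0r.
exact: is_derive1_comp gP0 fP.
Qed.

(* The library rules, restated for pointwise lambda terms and ring products:
   this is the shape of the derivative terms assembled below, which are then
   matched against the goal by [is_derive_eq]. *)
Lemma is_derive_cstf (c : R) x v : is_derive x v (fun=> c) 0.
Proof. exact: is_derive_cst. Qed.

Lemma is_derive_addf f g x v df dg :
  is_derive x v f df -> is_derive x v g dg ->
  is_derive x v (fun y => f y + g y) (df + dg).
Proof. exact: is_deriveD. Qed.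

Lemma is_derive_subf f g x v df dg :
  is_derive x v f df -> is_derive x v g dg ->
  is_derive x v (fun y => f y - g y) (df - dg).
Proof. exact: is_deriveB. Qed.

Lemma is_derive_mulf f g x v df dg :
  is_derive x v f df -> is_derive x v g dg ->
  is_derive x v (fun y => f y * g y) (f x * dg + g x * df).
Proof. exact: is_deriveM. Qed.

Lemma is_derive_exprnf f k x v df :
  is_derive x v f df ->
  is_derive x v (fun y => f y ^+ k) (k%:R * f x ^+ k.-1 * df).
Proof.
move=> /(is_deriveX k); suff -> : f ^+ k = (fun y => f y ^+ k) by [].
by apply/funext => y; rewrite exprfctE.
Qed.

Lemma is_derive_invf f x v df :
  is_derive x v f df -> f x != 0 ->
  is_derive x v (fun y => (f y)^-1) (- (f x ^+ 2)^-1 * df).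
Proof.
move=> [fx <-] fx0; split; first exact: derivableV.
by rewrite deriveV.
Qed.

Lemma is_derive_sumf n (F : 'I_n -> V -> R) x v (dF : 'I_n -> R) :
  (forall i, is_derive x v (F i) (dF i)) ->
  is_derive x v (fun y => \sum_i F i y) (\sum_i dF i).
Proof.
move=> /is_derive_sum; suff -> : \sum_i F i = (fun y => \sum_i F i y) by [].
by apply/funext => y; rewrite fct_sumE.
Qed.

Lemma near_eq_is_derive_nbhs f g x :
  (\forall y \near x, f y = g y) ->
  \forall y \near x, forall v df, is_derive y v f df -> is_derive y v g df.
Proof.
move=> /nbhs_interior; apply: filterS => y fg v df.
exact: near_eq_is_derive.
Qed.

End PointwiseDerivationRules.

Lemma is_derive_comp_linear (R : realType) (V W : normedModType R)
    (L : {linear V -> W}) (f : W -> R) x v df :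
  is_derive (L x) (L v) f df -> is_derive x v (fun y => f (L y)) df.
Proof.
move=> /is_derive_line fP; apply/is_derive_line.
suff -> : (fun h : R => f (L (h *: v + x))) = (fun h => f (h *: L v + L x)) by [].
by apply/funext => h; rewrite linearD linearZ.
Qed.

Section Coordinates.
Variables (R : realType) (n : nat).
Implicit Types (y z v : 'rV[R]_n).

Lemma evecE (i j : 'I_n) : evec R i 0 j = (i == j)%:R.
Proof. by rewrite /evec mxE eqxx eq_sym. Qed.

Lemma dotp0r y : dotp y 0 = 0.
Proof. by rewrite /dotp big1 // => i _; rewrite mxE mulr0. Qed.

Lemma dotp_evec y i : dotp y (evec R i) = y 0 i.
Proof.
rewrite /dotp (bigD1 i) //= evecE eqxx mulr1 big1 ?addr0 // => j ji.
by rewrite evecE eq_sym (negbTE ji) mulr0.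
Qed.

Lemma sqnormE y : sqnorm y = \sum_i y 0 i ^+ 2.
Proof. by apply: eq_bigr => i _; rewrite expr2. Qed.

Lemma sqnorm_ge0 y : 0 <= sqnorm y.
Proof. by rewrite sqnormE sumr_ge0 // => i _; rewrite sqr_ge0. Qed.

Lemma sqnorm_gt0 y : y != 0 -> 0 < sqnorm y.
Proof.
move=> y0; rewrite lt_def sqnorm_ge0 andbT; apply: contraNN y0.
rewrite sqnormE => /eqP/psumr_eq0P yi2; apply/eqP/rowP => i; rewrite mxE.
by apply/eqP; rewrite -sqrf_eq0 yi2 // => j _; rewrite sqr_ge0.
Qed.

Lemma sqnorm_gt0_sqr_ltXn m y (f : R) :
  (0 < m)%N -> f ^+ 2 < sqnorm y ^+ m -> 0 < sqnorm y.
Proof.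
move=> m_gt0 f_lt; rewrite lt_def sqnorm_ge0 andbT; apply: contraTneq f_lt => ->.
by rewrite expr0n gtn_eqF // -leNgt sqr_ge0.
Qed.

Lemma enormXn_neq0 m y : 0 < sqnorm y -> enorm y ^+ m != 0.
Proof. by move=> y_gt0; rewrite expf_neq0 // lt0r_neq0 // sqrtr_gt0. Qed.

Lemma sqr_enormXn y m : (enorm y ^+ m) ^+ 2 = sqnorm y ^+ m.
Proof. by rewrite -exprM mulnC exprM sqr_sqrtr // sqnorm_ge0. Qed.

Lemma is_derive_coord j y v : is_derive y v (fun z => z 0 j) (v 0 j).
Proof.
apply/is_derive_line.
suff -> : (fun h : R => (h *: v + y) 0 j) = (fun h => h * v 0 j + y 0 j).
  apply: (is_derive_eq (is_derive_addf (is_derive_mulf (is_derive_id _ _)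
    (is_derive_cstf _ _ _)) (is_derive_cstf _ _ _))).
  by rewrite /= mulr0 addr0 add0r mulr1.
by apply/funext => h; rewrite !mxE.
Qed.

Lemma is_derive_dotpl c y v : is_derive y v (fun z => dotp z c) (dotp v c).
Proof.
apply: (is_derive_eq (is_derive_sumf (fun i =>
  is_derive_mulf (is_derive_coord i y v) (is_derive_cstf (c 0 i) y v)))).
by apply: eq_bigr => i _; rewrite mulr0 add0r mulrC.
Qed.

Lemma is_derive_sqnorm y v : is_derive y v (@sqnorm R n) (2 * dotp y v).
Proof.
apply: (is_derive_eq (is_derive_sumf (fun i =>
  is_derive_mulf (is_derive_coord i y v) (is_derive_coord i y v)))).
by rewrite /dotp mulr_sumr; apply: eq_bigr => i _; ring.
Qed.

Lemma is_derive_enormXn m y v : 0 < sqnorm y ->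
  is_derive y v (fun z => enorm z ^+ m) (m%:R * enorm y ^+ m * dotp y v / sqnorm y).
Proof.
move=> y_gt0; apply: (is_derive_eq (is_derive_exprnf m
  (is_derive_comp1 (is_derive_sqnorm y v) (is_derive1_sqrt y_gt0)))).
rewrite -/(enorm y); have r_gt0 : 0 < enorm y by rewrite sqrtr_gt0.
have -> : sqnorm y = enorm y ^+ 2 by rewrite sqr_sqrtr ?sqnorm_ge0.
case: m => [|m]; first by rewrite !mul0r.
by rewrite exprSr /=; field; rewrite gt_eqF.
Qed.

End Coordinates.

Local Notation homog n R d :=
  (@mpoly.ishomog1 n R d (mpoly.mpoly_mdeg__canonical__mpoly_Measure n)).
Local Notation "''X_' i" := (mpoly.mpolyX _ (mpoly.mnm1 i)).

Section PolynomialFunctions.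
Variables (R : realType) (n : nat).
Implicit Types (P Q : mpoly.mpoly n R) (y : 'rV[R]_n).

Lemma mpoly_ring_ind (Pr : mpoly.mpoly n R -> Prop) :
  (forall c : R, Pr (mpoly.mpolyC n c)) -> (forall i, Pr 'X_i) ->
  (forall P Q, Pr P -> Pr Q -> Pr (P + Q)) ->
  (forall P Q, Pr P -> Pr Q -> Pr (P * Q)) ->
  forall P, Pr P.
Proof.
move=> PrC PrX PrD PrM.
have Pr1 : Pr 1 by rewrite -mpoly.mpolyC1.
have PrXm mm : Pr (mpoly.mpolyX R mm).
  rewrite mpoly.mpolyXE_id; apply: big_ind => // i _.
  by elim: (mpoly.fun_of_multinom mm i) => [|k IHk]; rewrite ?expr0 ?exprS; auto.
elim/mpoly.mpolyind => [|c mm Q _ _ PrQ]; first by rewrite -mpoly.mpolyC0.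
by apply: PrD => //; rewrite -mpoly.mul_mpolyC; apply: PrM.
Qed.

Lemma polyfunC (c : R) : polyfun (mpoly.mpolyC n c) = fun=> c.
Proof. by apply/funext => y; apply: mpoly.mevalC. Qed.

Lemma polyfunX i : polyfun 'X_i = fun y => y 0 i.
Proof. by apply/funext => y; apply: mpoly.mevalXU. Qed.

Lemma polyfunD P Q : polyfun (P + Q) = fun y => polyfun P y + polyfun Q y.
Proof. by apply/funext => y; apply: mpoly.mevalD. Qed.

Lemma polyfunM P Q : polyfun (P * Q) = fun y => polyfun P y * polyfun Q y.
Proof. by apply/funext => y; apply: mpoly.mevalM. Qed.

Lemma is_derive_polyfun i P y :
  is_derive y (evec R i) (polyfun P) (polyfun (mpoly.mderiv i P) y).
Proof.
move: y; elim/mpoly_ring_ind: P => [c|j|P Q IHP IHQ|P Q IHP IHQ] y.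
- by rewrite mpoly.mderivC polyfunC /polyfun mpoly.meval0; apply: is_derive_cstf.
- rewrite polyfunX; apply: (is_derive_eq (is_derive_coord j y (evec R i))).
  rewrite evecE mpoly.mderivX mpoly.mnm1E /polyfun mpoly.mevalZ.
  have [->|ji] := eqVneq j i; last by rewrite mul0r.
  rewrite mul1r mpoly.mevalX big1 // => k _.
  by rewrite mpoly.mnmBE subnn expr0.
- rewrite polyfunD mpoly.mderivD /polyfun mpoly.mevalD.
  exact: is_derive_addf.
- rewrite polyfunM; apply: (is_derive_eq (is_derive_mulf (IHP y) (IHQ y))).
  by rewrite mpoly.mderivM /polyfun mpoly.mevalD !mpoly.mevalM addrC mulrC.
Qed.

Lemma continuous_polyfun P : continuous (polyfun P).
Proof.
elim/mpoly_ring_ind: P => [c|i|P Q cP cQ|P Q cP cQ].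
- by rewrite polyfunC; apply: cst_continuous.
- by rewrite polyfunX; apply: coord_continuous.
- by rewrite polyfunD => y; apply: continuousD (cP y) (cQ y).
- by rewrite polyfunM => y; apply: continuousM (cP y) (cQ y).
Qed.

Lemma sqnorm_polyfun : @sqnorm R n = polyfun (\sum_i 'X_i * 'X_i).
Proof.
apply/funext => y; rewrite /polyfun (big_morph _ (mpoly.mevalD _) (mpoly.meval0 _)).
by apply: eq_bigr => i _; rewrite mpoly.mevalM mpoly.mevalXU.
Qed.

Lemma continuous_sqnorm : continuous (@sqnorm R n).
Proof. by rewrite sqnorm_polyfun; apply: continuous_polyfun. Qed.

Lemma sqr_polyfun_lt_sqnormXn_near m P x :
  polyfun P x ^+ 2 < sqnorm x ^+ m ->
  \forall y \near x, polyfun P y ^+ 2 < sqnorm y ^+ m.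
Proof.
pose gap := (\sum_i 'X_i * 'X_i) ^+ m - P ^+ 2.
have gapE y : polyfun gap y = sqnorm y ^+ m - polyfun P y ^+ 2.
  by rewrite sqnorm_polyfun /polyfun mpoly.mevalB !rmorphXn.
rewrite -subr_gt0 -gapE => /(cvgr_gt _ (@continuous_polyfun gap x)).
by apply: filterS => y; rewrite gapE subr_gt0.
Qed.

Lemma mpolyX_euler (mm : mpoly.multinom n) :
  \sum_i 'X_i * mpoly.mderiv i (mpoly.mpolyX R mm)
  = (mpoly.mdeg mm)%:R *: mpoly.mpolyX R mm.
Proof.
rewrite mpoly.mdegE natr_sum scaler_suml; apply: eq_bigr => i _.
rewrite mpoly.mderivX -scalerAr.
have [->|mi0] := eqVneq (mpoly.fun_of_multinom mm i) 0%N; first by rewrite !scale0r.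
congr (_ *: _); rewrite -mpoly.mpolyXD; congr (mpoly.mpolyX R _).
apply/mpoly.mnmP => j; rewrite mpoly.mnmDE mpoly.mnmBE mpoly.mnm1E.
by have [<-|] := eqVneq i j; rewrite ?subn0 // add1n subn1 prednK // lt0n.
Qed.

Lemma mpoly_euler d P :
  P \is homog n R d -> \sum_i 'X_i * mpoly.mderiv i P = d%:R *: P.
Proof.
move=> homP; rewrite [in RHS](mpoly.mpolyE P) scaler_sumr.
under eq_bigr => i _ do rewrite {1}(mpoly.mpolyE P) raddf_sum mulr_sumr.
rewrite exchange_big /= !big_seq; apply: eq_bigr => mm mmP.
under eq_bigr => i _ do rewrite mpoly.mderivZ -scalerAr.
rewrite -scaler_sumr mpolyX_euler scalerA mulrC -scalerA.
by rewrite (mpoly.dhomog_mf homP mmP).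
Qed.

Lemma polyfun_euler d P y : P \is homog n R d ->
  \sum_i y 0 i * polyfun (mpoly.mderiv i P) y = d%:R * polyfun P y.
Proof.
move=> /mpoly_euler /(congr1 (fun Q => polyfun Q y)).
rewrite /polyfun mpoly.mevalZ (big_morph _ (mpoly.mevalD _) (mpoly.meval0 _)) => <-.
by apply: eq_bigr => i _; rewrite mpoly.mevalM mpoly.mevalXU.
Qed.

End PolynomialFunctions.

Section SecondOrderOperators.
Variables (R : realType) (n : nat) (u : 'rV[R]_n -> R).

Lemma sqgrad_is_derive y (du : 'I_n -> R) :
  (forall i, is_derive y (evec R i) u (du i)) -> sqgrad u y = \sum_i du i ^+ 2.
Proof.
move=> duP; rewrite /sqgrad sqnormE; apply: eq_bigr => i _.
by have [_ <-] := duP i; rewrite mxE.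
Qed.

Variable x : 'rV[R]_n.

Lemma laplacian_is_derive (du : 'I_n -> 'rV[R]_n -> R) (d2u : 'I_n -> R) :
  (\forall y \near x, forall i, is_derive y (evec R i) u (du i y)) ->
  (forall i, is_derive x (evec R i) (du i) (d2u i)) ->
  laplacian u x = \sum_i d2u i.
Proof.
move=> duP d2uP; apply: eq_bigr => i _; have [_ <-] := d2uP i.
by apply: near_eq_derive; apply: filterS duP => y /(_ i) [_ <-].
Qed.

Lemma infLaplacian_is_derive (du : 'I_n -> R) (S : 'rV[R]_n -> R) (dS : 'I_n -> R) :
  (forall i, is_derive x (evec R i) u (du i)) ->
  (\forall y \near x, sqgrad u y = S y) ->
  (forall j, is_derive x (evec R j) S (dS j)) ->
  infLaplacian u x = \sum_j du j * dS j.
Proof.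
move=> duP SE dSP; apply: eq_bigr => j _; rewrite !mxE.
have [_ <-] := duP j; have [_ <-] := dSP j.
by rewrite /pderiv (near_eq_derive _ SE).
Qed.

End SecondOrderOperators.

Section LogNormRatio.
Variables (R : realType) (k1 k2 : nat).
Implicit Types (w v : 'rV[R]_(k1 + k2)) (i j : 'I_(k1 + k2)).

Lemma lsubmx_evec_lshift (j : 'I_k1) : lsubmx (evec R (lshift k2 j)) = evec R j.
Proof. by apply/rowP => i; rewrite mxE !evecE eq_lshift. Qed.

Lemma lsubmx_evec_rshift (j : 'I_k2) : lsubmx (evec R (rshift k1 j)) = 0.
Proof. by apply/rowP => i; rewrite [LHS]mxE evecE eq_rlshift mxE. Qed.

Lemma rsubmx_evec_lshift (j : 'I_k1) : rsubmx (evec R (lshift k2 j)) = 0.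
Proof. by apply/rowP => i; rewrite [LHS]mxE evecE eq_lrshift mxE. Qed.

Lemma rsubmx_evec_rshift (j : 'I_k2) : rsubmx (evec R (rshift k1 j)) = evec R j.
Proof. by apply/rowP => i; rewrite mxE !evecE eq_rshift. Qed.

Lemma sum_dotp_lsubmx_evec (a b : 'rV[R]_k1) :
  \sum_(i < k1 + k2) dotp a (lsubmx (evec R i)) * dotp b (lsubmx (evec R i))
  = dotp a b.
Proof.
rewrite big_split_ord /= [X in _ + X]big1 ?addr0 => [|j _]; last first.
  by rewrite lsubmx_evec_rshift dotp0r mul0r.
by apply: eq_bigr => j _; rewrite lsubmx_evec_lshift !dotp_evec.
Qed.

Lemma sum_dotp_rsubmx_evec (a b : 'rV[R]_k2) :
  \sum_(i < k1 + k2) dotp a (rsubmx (evec R i)) * dotp b (rsubmx (evec R i))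
  = dotp a b.
Proof.
rewrite big_split_ord /= big1 ?add0r => [|j _]; last first.
  by rewrite rsubmx_evec_lshift dotp0r mul0r.
by apply: eq_bigr => j _; rewrite rsubmx_evec_rshift !dotp_evec.
Qed.

Lemma sum_dotp_lsubmx_rsubmx_evec (a : 'rV[R]_k1) (b : 'rV[R]_k2) :
  \sum_(i < k1 + k2) dotp a (lsubmx (evec R i)) * dotp b (rsubmx (evec R i)) = 0.
Proof.
rewrite big_split_ord /= !big1 ?addr0 // => j _;
  by rewrite ?rsubmx_evec_lshift ?lsubmx_evec_rshift dotp0r ?mulr0 ?mul0r.
Qed.

Lemma sum_sqnorm_lsubmx_evec :
  \sum_(i < k1 + k2) sqnorm (lsubmx (evec R i)) = k1%:R.
Proof.
rewrite big_split_ord /= [X in _ + X]big1 ?addr0 => [|j _]; last first.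
  by rewrite lsubmx_evec_rshift /sqnorm dotp0r.
under eq_bigr do rewrite lsubmx_evec_lshift /sqnorm dotp_evec evecE eqxx.
by rewrite sumr_const card_ord.
Qed.

Lemma sum_sqnorm_rsubmx_evec :
  \sum_(i < k1 + k2) sqnorm (rsubmx (evec R i)) = k2%:R.
Proof.
rewrite big_split_ord /= big1 ?add0r => [|j _]; last first.
  by rewrite rsubmx_evec_lshift /sqnorm dotp0r.
under eq_bigr do rewrite rsubmx_evec_rshift /sqnorm dotp_evec evecE eqxx.
by rewrite sumr_const card_ord.
Qed.

Local Notation A w := (sqnorm (lsubmx w)).
Local Notation B w := (sqnorm (rsubmx w)).
Local Notation l i w := (dotp (lsubmx w) (lsubmx (evec R i))).
Local Notation r i w := (dotp (rsubmx w) (rsubmx (evec R i))).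
Local Notation u := (fun w => ln (enorm (lsubmx w) / enorm (rsubmx w))).

Let AP w v : is_derive w v (fun w => A w) (2 * dotp (lsubmx w) (lsubmx v)).
Proof. exact: is_derive_comp_linear (is_derive_sqnorm _ _). Qed.

Let BP w v : is_derive w v (fun w => B w) (2 * dotp (rsubmx w) (rsubmx v)).
Proof. exact: is_derive_comp_linear (is_derive_sqnorm _ _). Qed.

Let lP i w v : is_derive w v (fun w => l i w) (dotp (lsubmx v) (lsubmx (evec R i))).
Proof. exact: is_derive_comp_linear (is_derive_dotpl _ _ _). Qed.

Let rP i w v : is_derive w v (fun w => r i w) (dotp (rsubmx v) (rsubmx (evec R i))).
Proof. exact: is_derive_comp_linear (is_derive_dotpl _ _ _). Qed.

Variable z : 'rV[R]_(k1 + k2).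
Hypotheses (zl : lsubmx z != 0) (zr : rsubmx z != 0).

Let ABpos : \forall w \near z, 0 < A w /\ 0 < B w.
Proof.
have cA : {for z, continuous (fun w => A w)}.
  by apply: continuous_comp; [apply: continuous_lsubmx|apply: continuous_sqnorm].
have cB : {for z, continuous (fun w => B w)}.
  by apply: continuous_comp; [apply: continuous_rsubmx|apply: continuous_sqnorm].
apply: filterS2 (cvgr_gt _ cA _ (sqnorm_gt0 zl)) (cvgr_gt _ cB _ (sqnorm_gt0 zr)).
by move=> w.
Qed.

Let Az : A z != 0 := lt0r_neq0 (nbhs_singleton ABpos).1.
Let Bz : B z != 0 := lt0r_neq0 (nbhs_singleton ABpos).2.

Let duP : \forall w \near z,
  forall i, is_derive w (evec R i) u (l i w / A w - r i w / B w).
Proof.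
(* only near z: where a block vanishes, ln 0 = 0 breaks the identity *)
have uE : \forall w \near z, (ln (A w) - ln (B w)) / 2 = u w.
  apply: filterS ABpos => w [Aw Bw].
  rewrite /enorm ln_div ?posrE ?sqrtr_gt0 //.
  by rewrite -{1}(sqr_sqrtr (ltW Aw)) -{1}(sqr_sqrtr (ltW Bw)) !lnXn ?sqrtr_gt0 //; field.
apply: filterS2 (near_eq_is_derive_nbhs uE) ABpos => w uw [Aw Bw] i; apply: uw.
apply: (is_derive_eq (is_derive_mulf (is_derive_subf
  (is_derive_comp1 (AP w _) (is_derive1_ln Aw))
  (is_derive_comp1 (BP w _) (is_derive1_ln Bw))) (is_derive_cstf 2^-1 _ _))).
by field; rewrite !gt_eqF.
Qed.

Let sqgrad_near : \forall w \near z, sqgrad u w = (A w)^-1 + (B w)^-1.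
Proof.
apply: filterS2 duP ABpos => w duw [Aw Bw]; rewrite (sqgrad_is_derive duw).
rewrite (eq_bigr (fun i => (A w ^+ 2)^-1 * (l i w * l i w)
  + (B w ^+ 2)^-1 * (r i w * r i w) + (- 2 / (A w * B w)) * (l i w * r i w)));
  last by move=> i _; field; rewrite !gt_eqF.
rewrite !big_split /= -!mulr_sumr sum_dotp_lsubmx_evec sum_dotp_rsubmx_evec.
rewrite sum_dotp_lsubmx_rsubmx_evec -/(sqnorm (lsubmx w)) -/(sqnorm (rsubmx w)).
by field; rewrite !gt_eqF.
Qed.

Lemma laplacian_ln_norm_ratio :
  laplacian u z = (k1%:R - 2) / A z - (k2%:R - 2) / B z.
Proof.
have d2uP i : is_derive z (evec R i) (fun w => l i w / A w - r i w / B w)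
   ((A z)^-1 * sqnorm (lsubmx (evec R i)) + (- 2 / A z ^+ 2) * (l i z * l i z)
  - ((B z)^-1 * sqnorm (rsubmx (evec R i)) + (- 2 / B z ^+ 2) * (r i z * r i z))).
  apply: (is_derive_eq (is_derive_subf
    (is_derive_mulf (lP i z _) (is_derive_invf (AP z _) Az))
    (is_derive_mulf (rP i z _) (is_derive_invf (BP z _) Bz)))).
  by rewrite -/(sqnorm (lsubmx (evec R i))) -/(sqnorm (rsubmx (evec R i))); field; rewrite Az Bz.
rewrite (laplacian_is_derive duP d2uP) sumrB !big_split /= -!mulr_sumr.
rewrite sum_sqnorm_lsubmx_evec sum_sqnorm_rsubmx_evec.
rewrite sum_dotp_lsubmx_evec sum_dotp_rsubmx_evec.
by rewrite -/(sqnorm (lsubmx z)) -/(sqnorm (rsubmx z)); field; rewrite Az Bz.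
Qed.

Lemma infLaplacian_ln_norm_ratio : infLaplacian u z = 2 / B z ^+ 2 - 2 / A z ^+ 2.
Proof.
have dSP j : is_derive z (evec R j) (fun w => (A w)^-1 + (B w)^-1)
    ((- 2 / A z ^+ 2) * l j z + (- 2 / B z ^+ 2) * r j z).
  apply: (is_derive_eq (is_derive_addf (is_derive_invf (AP z _) Az)
    (is_derive_invf (BP z _) Bz))).
  by field; rewrite Az Bz.
rewrite (infLaplacian_is_derive (nbhs_singleton duP) sqgrad_near dSP).
rewrite (eq_bigr (fun j => (- 2 / A z ^+ 3) * (l j z * l j z)
  + (2 / B z ^+ 3) * (r j z * r j z)
  + (2 / (A z ^+ 2 * B z) - 2 / (A z * B z ^+ 2)) * (l j z * r j z)));
  last by move=> j _; field; rewrite Az Bz.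
rewrite !big_split /= -!mulr_sumr sum_dotp_lsubmx_evec sum_dotp_rsubmx_evec.
rewrite sum_dotp_lsubmx_rsubmx_evec.
by rewrite -/(sqnorm (lsubmx z)) -/(sqnorm (rsubmx z)); field; rewrite Az Bz.
Qed.

Lemma pLaplacian_ln_norm_ratio p : pLaplacian p u z =
  ((A z)^-1 + (B z)^-1) * ((k1%:R - p) / A z - (k2%:R - p) / B z).
Proof.
rewrite /pLaplacian -/(infLaplacian u z) (nbhs_singleton sqgrad_near).
by rewrite laplacian_ln_norm_ratio infLaplacian_ln_norm_ratio; field; rewrite Az Bz.
Qed.

End LogNormRatio.

Definition normalized (R : realType) n (m : nat) (phi : 'rV[R]_n -> R) (y : 'rV[R]_n) :=
  phi y / enorm y ^+ m.

Section NormalizedHomogeneous.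
Variables (R : realType) (n m : nat) (phi : 'rV[R]_n -> R).
Variables (dphi d2phi : 'I_n -> 'rV[R]_n -> R).
Implicit Types (x y : 'rV[R]_n) (i : 'I_n).
Hypothesis dphiP : forall y i, is_derive y (evec R i) phi (dphi i y).
Hypothesis d2phiP : forall y i, is_derive y (evec R i) (dphi i) (d2phi i y).
Hypothesis phi_euler : forall y, \sum_i y 0 i * dphi i y = m%:R * phi y.
Local Notation t := (normalized m phi).
Local Notation rho y := (enorm y ^+ m).

Definition normalized_deriv i y :=
  dphi i y / rho y - m%:R * phi y * y 0 i / (rho y * sqnorm y).

Definition normalized_deriv2 i y :=
  (d2phi i y - 2 * m%:R * y 0 i * dphi i y / sqnorm y
   + m%:R * (m%:R + 2) * phi y * y 0 i ^+ 2 / sqnorm y ^+ 2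
   - m%:R * phi y / sqnorm y) / rho y.

Lemma is_derive_normalized y i : 0 < sqnorm y ->
  is_derive y (evec R i) t (normalized_deriv i y).
Proof.
move=> y_gt0; rewrite /normalized; apply: (is_derive_eq (is_derive_mulf (dphiP y i)
  (is_derive_invf (is_derive_enormXn m (evec R i) y_gt0) (enormXn_neq0 m y_gt0)))).
rewrite dotp_evec /normalized_deriv.
by field; rewrite enormXn_neq0 // gt_eqF.
Qed.

Lemma is_derive_normalized_deriv x i : 0 < sqnorm x ->
  is_derive x (evec R i) (normalized_deriv i) (normalized_deriv2 i x).
Proof.
move=> x_gt0; have rx0 : rho x * sqnorm x != 0.
  by rewrite mulf_neq0 ?enormXn_neq0 ?gt_eqF.
rewrite /normalized_deriv; apply: (is_derive_eq (is_derive_subf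
  (is_derive_mulf (d2phiP x i) (is_derive_invf
     (is_derive_enormXn m (evec R i) x_gt0) (enormXn_neq0 m x_gt0)))
  (is_derive_mulf (is_derive_mulf (is_derive_mulf (is_derive_cstf m%:R x (evec R i))
     (dphiP x i)) (is_derive_coord i x (evec R i)))
     (is_derive_invf (is_derive_mulf (is_derive_enormXn m (evec R i) x_gt0)
        (is_derive_sqnorm x (evec R i))) rx0)))).
rewrite dotp_evec evecE eqxx mulr1n /normalized_deriv2.
by field; rewrite enormXn_neq0 // gt_eqF.
Qed.

Lemma sum_normalized_deriv_coord y : 0 < sqnorm y ->
  \sum_i normalized_deriv i y * y 0 i = 0.
Proof.
move=> y_gt0; rewrite (eq_bigr (fun i => (rho y)^-1 * (y 0 i * dphi i y)
  + (- m%:R * phi y / (rho y * sqnorm y)) * y 0 i ^+ 2)); last first.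
  by move=> i _; rewrite /normalized_deriv; field; rewrite enormXn_neq0 // gt_eqF.
rewrite big_split /= -!mulr_sumr phi_euler -sqnormE.
by field; rewrite enormXn_neq0 // gt_eqF.
Qed.

Hypothesis m_gt0 : (0 < m)%N.
Hypothesis phi_eikonal : forall y, \sum_i dphi i y ^+ 2 = (m ^ 2)%:R * sqnorm y ^+ (m - 1).

Lemma sum_sqr_normalized_deriv y : 0 < sqnorm y ->
  \sum_i normalized_deriv i y ^+ 2 = (m ^ 2)%:R * (1 - t y ^+ 2) / sqnorm y.
Proof.
move=> y_gt0; have rho2 : sqnorm y ^+ (m - 1) = rho y ^+ 2 / sqnorm y.
  by rewrite sqr_enormXn -{2}(subnK m_gt0) exprD expr1 mulfK ?gt_eqF.
rewrite (eq_bigr (fun i => (rho y ^+ 2)^-1 * dphi i y ^+ 2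
  + (- 2 * m%:R * phi y / (rho y ^+ 2 * sqnorm y)) * (y 0 i * dphi i y)
  + (m%:R ^+ 2 * phi y ^+ 2 / (rho y ^+ 2 * sqnorm y ^+ 2)) * y 0 i ^+ 2));
  last by move=> i _; rewrite /normalized_deriv; field; rewrite enormXn_neq0 // gt_eqF.
rewrite !big_split /= -!mulr_sumr phi_eikonal phi_euler -sqnormE rho2 /normalized natrX.
by field; rewrite enormXn_neq0 // gt_eqF.
Qed.

Hypothesis phi_harmonic : forall y, \sum_i d2phi i y = 0.

Lemma sum_normalized_deriv2 x : 0 < sqnorm x ->
  \sum_i normalized_deriv2 i x = - m%:R * (n%:R + m%:R - 2) * t x / sqnorm x.
Proof.
move=> x_gt0; rewrite (eq_bigr (fun i => (rho x)^-1 * d2phi i x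
  + (- 2 * m%:R / (rho x * sqnorm x)) * (x 0 i * dphi i x)
  + (m%:R * (m%:R + 2) * phi x / (rho x * sqnorm x ^+ 2)) * x 0 i ^+ 2
  + (- m%:R * phi x / (rho x * sqnorm x)) * 1));
  last by move=> i _; rewrite /normalized_deriv2; field; rewrite enormXn_neq0 // gt_eqF.
rewrite !big_split /= -!mulr_sumr phi_harmonic phi_euler -sqnormE sumr_const card_ord.
by rewrite /normalized -mulr_natr; field; rewrite enormXn_neq0 // gt_eqF.
Qed.

Lemma normalized_gt_N1_lt1 y : phi y ^+ 2 < sqnorm y ^+ m -> -1 < t y < 1.
Proof.
move=> dom; have rho2_gt0 : 0 < sqnorm y ^+ m := le_lt_trans (sqr_ge0 (phi y)) dom.
have : t y ^+ 2 < 1.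
  by rewrite /normalized expr_div_n sqr_enormXn ltr_pdivrMr // mul1r.
by rewrite expr2 => t2; apply/andP; split; nra.
Qed.

End NormalizedHomogeneous.

Section Profiles.
Variable R : realType.
Implicit Types (s f a : R) (k : nat).

Lemma onem_sqr_gt0 s : -1 < s < 1 -> 0 < 1 - s ^+ 2.
Proof. by case/andP => s_gtN1 s_lt1; rewrite expr2; nra. Qed.

Lemma sqrt_onem_sqrXn_neq0 k s : -1 < s < 1 -> Num.sqrt (1 - s ^+ 2) ^+ k != 0.
Proof. by move=> /onem_sqr_gt0 w_gt0; rewrite expf_neq0 // lt0r_neq0 // sqrtr_gt0. Qed.

Lemma is_derive1_onem_sqr s : is_derive s 1 (fun s : R => 1 - s ^+ 2) (- (2 * s)).
Proof.
apply: (is_derive_eq (is_derive_subf (is_derive_cstf 1 s 1)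
  (is_derive_exprnf 2 (is_derive_id s 1)))).
by rewrite expr1 mulr1 sub0r.
Qed.

Lemma is_derive1_sqrt_onem_sqrVn k s : -1 < s < 1 ->
  is_derive s 1 (fun s : R => Num.sqrt (1 - s ^+ 2) ^- k)
    (k%:R * s / (1 - s ^+ 2) * Num.sqrt (1 - s ^+ 2) ^- k).
Proof.
move=> /onem_sqr_gt0 w_gt0; have q_gt0 : 0 < Num.sqrt (1 - s ^+ 2) by rewrite sqrtr_gt0.
apply: (is_derive_eq (is_derive_invf (is_derive_exprnf k (is_derive_comp1
  (is_derive1_onem_sqr s) (is_derive1_sqrt w_gt0))) (expf_neq0 _ (lt0r_neq0 q_gt0)))).
move: q_gt0; set q := Num.sqrt _ => q_gt0.
have -> : 1 - s ^+ 2 = q ^+ 2 by rewrite sqr_sqrtr // ltW.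
case: k => [|k]; first by rewrite /= !mul0r mulr0.
rewrite /= [q ^+ k.+1]exprSr.
by have q_neq0 := lt0r_neq0 q_gt0; field; rewrite q_neq0 expf_neq0.
Qed.

Lemma is_derive1_artanh s : -1 < s < 1 ->
  is_derive s 1 (@artanh R) (Num.sqrt (1 - s ^+ 2) ^- 2).
Proof.
move=> s_range; have /andP[s_gtN1 s_lt1] := s_range.
have sB_gt0 : 0 < 1 - s by rewrite subr_gt0.
have sD_gt0 : 0 < 1 + s by rewrite -ltrBlDl sub0r.
rewrite sqr_sqrtr ?ltW ?onem_sqr_gt0 //; rewrite /artanh.
apply: (is_derive_eq (is_derive_mulf (is_derive_comp1
  (is_derive_mulf (is_derive_addf (is_derive_cstf 1 s 1) (is_derive_id s 1))
     (is_derive_invf (is_derive_subf (is_derive_cstf 1 s 1) (is_derive_id s 1))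
        (lt0r_neq0 sB_gt0)))
  (is_derive1_ln (divr_gt0 sD_gt0 sB_gt0))) (is_derive_cstf 2^-1 s 1))).
by rewrite /=; field; rewrite !lt0r_neq0 ?onem_sqr_gt0.
Qed.

Lemma is_derive1_div_sqrt_onem_sqr s : -1 < s < 1 ->
  is_derive s 1 (fun s : R => s / Num.sqrt (1 - s ^+ 2)) (Num.sqrt (1 - s ^+ 2) ^- 3).
Proof.
move=> s_range; have w_gt0 := onem_sqr_gt0 s_range.
apply: (is_derive_eq (is_derive_mulf (is_derive_id s 1)
  (is_derive1_sqrt_onem_sqrVn 1 s_range))).
have : 0 < Num.sqrt (1 - s ^+ 2) by rewrite sqrtr_gt0.
set q := Num.sqrt _ => q_gt0; have wq : 1 - s ^+ 2 = q ^+ 2 by rewrite sqr_sqrtr // ltW.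
have -> : q ^- 3 = (q ^+ 2 + s ^+ 2) / q ^+ 3 by rewrite -wq subrK mul1r.
by rewrite wq /=; field; rewrite lt0r_neq0.
Qed.

Lemma div_sqrt_onem_sqr_div f a : 0 < a ->
  f / a / Num.sqrt (1 - (f / a) ^+ 2) = f / Num.sqrt (a ^+ 2 - f ^+ 2).
Proof.
move=> a_gt0; have -> : 1 - (f / a) ^+ 2 = a^-1 ^+ 2 * (a ^+ 2 - f ^+ 2).
  by field; rewrite lt0r_neq0.
rewrite sqrtrM ?sqr_ge0 // sqrtr_sqr ger0_norm ?invr_ge0 ?ltW //.
(* when the square root vanishes, both sides are 0 since x / 0 = 0 *)
have [->|S_neq0] := eqVneq (Num.sqrt (a ^+ 2 - f ^+ 2)) 0; first by rewrite !(mulr0, invr0).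
by field; rewrite S_neq0 lt0r_neq0.
Qed.

End Profiles.

Section ProfileComposition.
Variables (R : realType) (n k : nat) (c : R) (x : 'rV[R]_n).
Variables (t : 'rV[R]_n -> R) (dt : 'I_n -> 'rV[R]_n -> R) (d2t : 'I_n -> R).
Variables (g : R -> R) (u : 'rV[R]_n -> R).
Local Notation a s := (Num.sqrt (1 - s ^+ 2) ^- k).
Hypothesis x_gt0 : 0 < sqnorm x.
Hypothesis dtP : \forall y \near x, forall i, is_derive y (evec R i) t (dt i y).
Hypothesis d2tP : forall i, is_derive x (evec R i) (dt i) (d2t i).
Hypothesis t_range : \forall y \near x, -1 < t y < 1.
Hypothesis t_eikonal :
  \forall y \near x, \sum_i dt i y ^+ 2 = c * (1 - t y ^+ 2) / sqnorm y.
Hypothesis t_radial : \sum_i dt i x * x 0 i = 0.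
Hypothesis gP : forall s : R, -1 < s < 1 -> is_derive s 1 g (a s).
Hypothesis uE : \forall y \near x, g (t y) = u y.

Let duP : \forall y \near x, forall i, is_derive y (evec R i) u (a (t y) * dt i y).
Proof.
apply: filterS3 (near_eq_is_derive_nbhs uE) dtP t_range => y uy dty ty i.
exact/uy/is_derive_comp1/gP.
Qed.

Let sqgrad_near : \forall y \near x,
  sqgrad u y = c * a (t y) ^+ 2 * (1 - t y ^+ 2) / sqnorm y.
Proof.
apply: filterS2 duP t_eikonal => y duy ty; rewrite (sqgrad_is_derive duy).
by under eq_bigr do rewrite exprMn; rewrite -mulr_sumr ty; ring.
Qed.

Let tx : -1 < t x < 1 := nbhs_singleton t_range.
Let w_neq0 : 1 - t x ^+ 2 != 0 := lt0r_neq0 (onem_sqr_gt0 tx).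
Let x_neq0 : sqnorm x != 0 := lt0r_neq0 x_gt0.
Let a_neq0 : Num.sqrt (1 - t x ^+ 2) ^+ k != 0 := sqrt_onem_sqrXn_neq0 k tx.
Let dtx : forall i, is_derive x (evec R i) t (dt i x) := nbhs_singleton dtP.
Let eikx : \sum_i dt i x ^+ 2 = c * (1 - t x ^+ 2) / sqnorm x := nbhs_singleton t_eikonal.

Lemma sqgrad_profile : sqgrad u x = c * a (t x) ^+ 2 * (1 - t x ^+ 2) / sqnorm x.
Proof. exact: nbhs_singleton sqgrad_near. Qed.

Lemma laplacian_profile : laplacian u x =
  c * k%:R * t x * a (t x) / sqnorm x + a (t x) * \sum_i d2t i.
Proof.
rewrite (laplacian_is_derive duP (fun i => is_derive_mulf
  (is_derive_comp1 (dtx i) (is_derive1_sqrt_onem_sqrVn k tx)) (d2tP i))).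
rewrite (eq_bigr (fun i => a (t x) * d2t i
  + k%:R * t x / (1 - t x ^+ 2) * a (t x) * dt i x ^+ 2)); last by move=> i _; ring.
rewrite big_split /= -!mulr_sumr eikx.
by field; rewrite ?a_neq0 ?x_neq0 ?w_neq0.
Qed.

Lemma infLaplacian_profile : infLaplacian u x =
  2 * c ^+ 2 * (k%:R - 1) * t x * (1 - t x ^+ 2) * a (t x) ^+ 3 / sqnorm x ^+ 2.
Proof.
have aP j := is_derive_comp1 (dtx j) (is_derive1_sqrt_onem_sqrVn k tx).
rewrite (infLaplacian_is_derive (nbhs_singleton duP) sqgrad_near (fun j =>
  is_derive_mulf (is_derive_mulf (is_derive_mulf (is_derive_cstf c x _)
    (is_derive_exprnf 2 (aP j)))
    (is_derive_subf (is_derive_cstf 1 x _) (is_derive_exprnf 2 (dtx j))))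
  (is_derive_invf (is_derive_sqnorm x (evec R j)) (lt0r_neq0 x_gt0)))).
rewrite (eq_bigr (fun j => 2 * c * a (t x) ^+ 3 * (k%:R - 1) * t x / sqnorm x * dt j x ^+ 2
  - 2 * c * a (t x) ^+ 3 * (1 - t x ^+ 2) / sqnorm x ^+ 2 * (dt j x * x 0 j))).
  by rewrite sumrB -!mulr_sumr eikx t_radial; field; rewrite ?a_neq0 ?x_neq0 ?w_neq0.
by move=> j _; rewrite dotp_evec /=; field; rewrite ?a_neq0 ?x_neq0 ?w_neq0.
Qed.

End ProfileComposition.

Section EikonalHarmonicPolynomial.
Variables (R : realType) (m m1 : nat) (P : mpoly.mpoly (m * m1 + 2) R).
Local Notation n := (m * m1 + 2).
Local Notation phi := (polyfun P).
Local Notation dphi i := (polyfun (mpoly.mderiv i P)).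
Local Notation d2phi i := (polyfun (mpoly.mderiv i (mpoly.mderiv i P))).
Local Notation t := (normalized m phi).
Implicit Types (y : 'rV[R]_n) (i : 'I_n).
Hypothesis m_gt0 : (0 < m)%N.
Hypothesis P_homog : P \is homog n R m.
Hypothesis P_eikonal :
  forall x, sqnorm (grad phi x) = (m ^ 2)%:R * sqnorm x ^+ (m - 1).
Hypothesis P_harmonic : forall x, laplacian phi x = 0.

Variables (k : nat) (g : R -> R) (u : 'rV[R]_n -> R) (x : 'rV[R]_n).
Hypothesis gP : forall s : R, -1 < s < 1 -> is_derive s 1 g (Num.sqrt (1 - s ^+ 2) ^- k).
Hypothesis x_dom : phi x ^+ 2 < sqnorm x ^+ m.
Hypothesis uE : \forall y \near x, g (t y) = u y.

Let dphiP y i : is_derive y (evec R i) phi (dphi i y).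
Proof. exact: is_derive_polyfun. Qed.

Let d2phiP y i : is_derive y (evec R i) (dphi i) (d2phi i y).
Proof. exact: is_derive_polyfun. Qed.

Let phi_euler y : \sum_i y 0 i * dphi i y = m%:R * phi y.
Proof. exact: polyfun_euler. Qed.

Let phi_eikonal y : \sum_i dphi i y ^+ 2 = (m ^ 2)%:R * sqnorm y ^+ (m - 1).
Proof. by rewrite -(sqgrad_is_derive (dphiP y)); apply: P_eikonal. Qed.

Let phi_harmonic y : \sum_i d2phi i y = 0.
Proof.
rewrite -[in RHS](P_harmonic y); symmetry; apply: (laplacian_is_derive _ (d2phiP y)).
near=> z; exact: dphiP.
Unshelve. all: by end_near.
Qed.

Let x_gt0 : 0 < sqnorm x := sqnorm_gt0_sqr_ltXn m_gt0 x_dom.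
Let dom_near := sqr_polyfun_lt_sqnormXn_near x_dom.
Let dom_gt0 : \forall y \near x, 0 < sqnorm y.
Proof. by apply: filterS dom_near => y; apply: sqnorm_gt0_sqr_ltXn. Qed.

Local Notation dt := (normalized_deriv m phi (fun i => dphi i)).

Let dtP : \forall y \near x, forall i, is_derive y (evec R i) t (dt i y).
Proof. by apply: filterS dom_gt0 => y y_gt0 i; apply: is_derive_normalized. Qed.

Let d2tP i : is_derive x (evec R i) (dt i)
  (normalized_deriv2 m phi (fun i => dphi i) (fun i => d2phi i) i x).
Proof. exact: is_derive_normalized_deriv. Qed.

Let t_range : \forall y \near x, -1 < t y < 1.
Proof. by apply: filterS dom_near => y; apply: normalized_gt_N1_lt1. Qed.

Let t_eikonal : \forall y \near x,
  \sum_i dt i y ^+ 2 = (m ^ 2)%:R * (1 - t y ^+ 2) / sqnorm y.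
Proof. by apply: filterS dom_gt0 => y; apply: sum_sqr_normalized_deriv. Qed.

Let t_radial : \sum_i dt i x * x 0 i = 0.
Proof. exact: sum_normalized_deriv_coord. Qed.

Lemma pLaplacian_normalized_profile p : pLaplacian p u x =
  ((p - 1) * (k%:R - 1) - m1%:R) * ((m ^ 2)%:R ^+ 2 * t x * (1 - t x ^+ 2)
    * Num.sqrt (1 - t x ^+ 2) ^- k ^+ 3 / sqnorm x ^+ 2).
Proof.
rewrite /pLaplacian -/(infLaplacian u x) (sqgrad_profile dtP t_range t_eikonal gP uE).
rewrite (laplacian_profile x_gt0 dtP d2tP t_range t_eikonal gP uE).
rewrite (infLaplacian_profile x_gt0 dtP t_range t_eikonal t_radial gP uE).
rewrite (sum_normalized_deriv2 phi_euler phi_harmonic x_gt0) natrD natrM.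
by field; rewrite (sqrt_onem_sqrXn_neq0 k (nbhs_singleton t_range)) lt0r_neq0.
Qed.

Lemma infLaplacian_normalized_profile : infLaplacian u x =
  (k%:R - 1) * (2 * (m ^ 2)%:R ^+ 2 * t x * (1 - t x ^+ 2)
    * Num.sqrt (1 - t x ^+ 2) ^- k ^+ 3 / sqnorm x ^+ 2).
Proof.
rewrite (infLaplacian_profile x_gt0 dtP t_range t_eikonal t_radial gP uE).
by ring.
Qed.

End EikonalHarmonicPolynomial.

Theorem mainTheorem5 (R : realType) :
  (forall (m m1 : nat) (P : mpoly.mpoly (m * m1 + 2) R),
     (0 < m)%N -> (0 < m1)%N ->
     P \is @mpoly.ishomog1 (m * m1 + 2) R m (mpoly.mpoly_mdeg__canonical__mpoly_Measure (m * m1 + 2)) ->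
     (forall x, sqnorm (grad (polyfun P) x) = (m ^ 2)%:R * sqnorm x ^+ (m - 1)) ->
     (forall x, laplacian (polyfun P) x = 0) ->
     let phi := polyfun P in
     let D := fun x : 'rV[R]_(m * m1 + 2) => x != 0 /\ phi x ^+ 2 < sqnorm x ^+ m in
     (* (i) *)
     (forall x, D x ->
        pLaplacian (1 + m1%:R)
          (fun y => artanh (phi y / enorm y ^+ m)) x = 0) /\
     (* (ii) *)
     (forall x, D x ->
        pLaplacian (1 + m1%:R / 2)
          (fun y => phi y / Num.sqrt (enorm y ^+ (2 * m) - phi y ^+ 2)) x = 0) /\
     (* (iii) *)
     (forall x, D x ->
        infLaplacian (fun y => asin (phi y / enorm y ^+ m)) x = 0)) /\
  (* (iv) *)
  (forall (k : nat), (0 < k)%N ->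
     forall z : 'rV[R]_(k + k), lsubmx z != 0 -> rsubmx z != 0 ->
       pLaplacian k%:R
         (fun w : 'rV[R]_(k + k) => ln (enorm (lsubmx w) / enorm (rsubmx w))) z = 0).
Proof.
split; last first.
  by move=> k _ z zl zr; rewrite pLaplacian_ln_norm_ratio // !subrr !mul0r subrr mulr0.
move=> m m1 P m_gt0 _ homP eikP harmP phi D.
have normalizedE (g : R -> R) (x : 'rV[R]_(m * m1 + 2)) :
    \forall y \near x, g (normalized m phi y) = g (phi y / enorm y ^+ m).
  by apply: filterS filterT.
split; [|split] => x [_ x_dom].
- rewrite (pLaplacian_normalized_profile m_gt0 homP eikP harmP (k := 2)
    (@is_derive1_artanh R) x_dom (normalizedE _ x)).
  by ring.
- have uE : \forall y \near x, normalized m phi y / Num.sqrt (1 - normalized m phi y ^+ 2)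
      = phi y / Num.sqrt (enorm y ^+ (2 * m) - phi y ^+ 2).
    apply: filterS (sqr_polyfun_lt_sqnormXn_near x_dom) => y y_dom.
    rewrite /normalized div_sqrt_onem_sqr_div ?(mulnC 2 m) ?exprM //.
    by rewrite exprn_gt0 // sqrtr_gt0 (sqnorm_gt0_sqr_ltXn m_gt0 y_dom).
  rewrite (pLaplacian_normalized_profile m_gt0 homP eikP harmP (k := 3)
    (@is_derive1_div_sqrt_onem_sqr R) x_dom uE).
  have -> : (1 + m1%:R / 2 - 1) * (3%:R - 1) - m1%:R = 0 :> R by field.
  by rewrite mul0r.
- rewrite (infLaplacian_normalized_profile m_gt0 homP eikP (k := 1)
    (@is_derive1_asin R) x_dom (normalizedE _ x)).
  by rewrite subrr mul0r.
Qed.
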